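(* For any real numbers $t\ge1$ and $\varepsilon>0$, there exist an instance, a $t$-cohesive group $N^*$, and an allocation $A$ satisfying EJR-M such that the average satisfaction of $N^*$ with respect to $A$ is at most $\lfloor t\rfloor\cdot\left(1-\frac{\lfloor t\rfloor+1}{2t}\right)+\varepsilon$.
   Context: Model: There is a set of agents $N=\{1,\dots,n\}$. The resource $R$ consists of a cake $C=[0,c]$ for a real $c\ge 0$ and a set of indivisible goods $G=\{g_1,\dots,g_m\}$ for an integer $m\ge 0$, with $\max(c,m)>0$. A piece of cake is a union of finitely many disjoint closed subintervals of $C$; its length $\ell(\cdot)$ is the sum of the lengths of its intervals. A bundle $R'=(C',G')$ consists of a piece of cake $C'\subseteq C$ and a set $G'\subseteq G$; its size is $s(R')=\ell(C')+|G'|$. Each agent $i$ approves a bundle $R_i=(C_i,G_i)$, and her utility for a bundle $R'$ is $u_i(R')=\ell(C_i\cap C')+|G_i\cap G'|$. A parameter $\alpha\in(0,c+m]$ is given; an allocation is a bundle $A$ with $s(A)\le\alpha$. For a real $t>0$, $N^*\subseteq N$ is $t$-cohesive if $|N^*|\ge t n/\alpha$ and $s(\bigcap_{i\in N^*}R_i)\ge t$. EJR-M: an allocation $A$ satisfies EJR-M if for every real $t>0$ and every $t$-cohesive group $N^*$ for which there exists a bundle $R^*\subseteq R$ with $s(R^* )=t$ and $R^*\subseteq R_i$ for all $i\in N^*$, there is $j\in N^*$ with $u_j(A)\ge t$. The average satisfaction of a group $N'\subseteq N$ with respect to $A$ is $\frac1{|N'|}\sum_{i\in N'}u_i(A)$.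 *)

From HB Require Import structures.
From mathcomp Require Import all_boot all_order all_algebra.
From mathcomp Require Import all_classical all_reals all_analysis.
Set Implicit Arguments. Unset Strict Implicit. Unset Printing Implicit Defensive.
Import Order.TTheory GRing.Theory Num.Theory.
Local Open Scope classical_set_scope.
Local Open Scope ring_scope.

Section Model.
Variable R : realType.

(* A piece of the cake C = [0,c]: a union of finitely many pairwise disjoint
   closed subintervals [a,b] (0 <= a <= b <= c) of C. *)
Definition is_piece (c : R) (S : set R) : Prop :=
  exists s : seq (R * R),
    (forall k, (k < size s)%N ->
       0 <= (nth (0,0) s k).1 /\ (nth (0,0) s k).1 <= (nth (0,0) s k).2
       /\ (nth (0,0) s k).2 <= c) /\
    (forall k l, (k < l < size s)%N ->
       `[(nth (0,0) s k).1, (nth (0,0) s k).2]%classic `&`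
       `[(nth (0,0) s l).1, (nth (0,0) s l).2]%classic = set0) /\
    S = \bigcup_(k in [set k | (k < size s)%N])
          `[(nth (0,0) s k).1, (nth (0,0) s k).2]%classic.

Definition len (S : set R) : R := fine (lebesgue_measure S).

Definition size_b (m : nat) (C' : set R) (G' : {set 'I_m}) : R :=
  len C' + #|G'|%:R.

Definition util (m : nat) (Ci : set R) (Gi : {set 'I_m})
  (C' : set R) (G' : {set 'I_m}) : R :=
  len (Ci `&` C') + #|Gi :&: G'|%:R.

Definition is_instance (n m : nat) (c alpha : R)
  (Ac : 'I_n -> set R) (Ag : 'I_n -> {set 'I_m}) : Prop :=
  (0 < n)%N /\ 0 <= c /\ 0 < Num.max c m%:R /\ 0 < alpha /\ alpha <= c + m%:R /\
  forall i, is_piece c (Ac i).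

Definition is_allocation (m : nat) (c alpha : R)
  (Cs : set R) (Gs : {set 'I_m}) : Prop :=
  is_piece c Cs /\ size_b Cs Gs <= alpha.

Definition cohesive (n m : nat) (alpha : R)
  (Ac : 'I_n -> set R) (Ag : 'I_n -> {set 'I_m}) (t : R) (N' : {set 'I_n}) : Prop :=
  t * n%:R / alpha <= #|N'|%:R /\
  t <= size_b (\bigcap_(i in [set i | i \in N']) Ac i)
              (\bigcap_(i in N') Ag i).

Definition EJRM (n m : nat) (c alpha : R)
  (Ac : 'I_n -> set R) (Ag : 'I_n -> {set 'I_m})
  (Cs : set R) (Gs : {set 'I_m}) : Prop :=
  forall (t : R) (N' : {set 'I_n}), 0 < t -> cohesive alpha Ac Ag t N' ->
    (exists (Cst : set R) (Gst : {set 'I_m}),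
        is_piece c Cst /\ size_b Cst Gst = t /\
        forall i, i \in N' -> Cst `<=` Ac i /\ Gst \subset Ag i) ->
    exists2 j, j \in N' & t <= util (Ac j) (Ag j) Cs Gs.

Definition avg_sat (n m : nat) (Ac : 'I_n -> set R) (Ag : 'I_n -> {set 'I_m})
  (N' : {set 'I_n}) (Cs : set R) (Gs : {set 'I_m}) : R :=
  (#|N'|%:R)^-1 * \sum_(i in N') util (Ac i) (Ag i) Cs Gs.

End Model.

From HB Require Import structures.
From mathcomp Require Import all_boot all_order all_algebra.
From mathcomp Require Import zify.
Set Implicit Arguments.
Unset Strict Implicit.
Unset Printing Implicit Defensive.
Import Order.TTheory GRing.Theory Num.Theory.

(* The cake is empty and all goods are indivisible.  With k = floor t and n0
   large, the n0 agents of N* share k+1 common goods, and agent a also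
   approves private goods (a, l), l < k.  The allocation contains (a, l)
   exactly when a >= thr l, where thr l is about (l+1) n0 / t, so agent a gets
   #{l | thr l <= a} and N* has average satisfaction about
   sum_l (1 - (l+1)/t) = k (1 - (k+1)/(2t)).  EJR-M holds because a group that
   is cohesive for a bundle of j goods has at least j n0 / t members, hence
   j <= k, while at most thr (j-1) < j n0 / t agents get less than j.
   Agents approving nothing and goods approved by nobody only rescale n and m,
   so that alpha is large enough for the allocation and at most m. *)

Lemma card_ord_ltn N T : #|[set x : 'I_N | x < T]| = minn T N.
Proof.
case: (leqP T N) => [TN | NT].
  have -> : [set x : 'I_N | x < T] = widen_ord TN @: [set: 'I_T].
    apply/setP => x; rewrite inE.
    apply/idP/imsetP => [xT | [y _ ->]]; last by rewrite /= ltn_ord.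
    by exists (Ordinal xT) => //; apply: val_inj.
  by rewrite card_imset ?cardsT ?card_ord // => a b /(congr1 val) /= /val_inj.
rewrite -[RHS]card_ord -cardsT.
by apply: eq_card => x; rewrite !inE (ltn_trans (ltn_ord x) NT).
Qed.

Lemma card_ord_geq N T : #|[set x : 'I_N | T <= x]| = N - T.
Proof.
have -> : [set x : 'I_N | T <= x] = ~: [set x : 'I_N | x < T].
  by apply/setP => x; rewrite !inE leqNgt.
by have := cardsC [set x : 'I_N | x < T]; rewrite card_ord_ltn card_ord; lia.
Qed.

Section Goods.
Variables (k n0 D : nat) (thr : nat -> nat).

Definition good := ('I_k.+1 + 'I_n0 * 'I_k + 'I_D)%type.

Definition approved (a : 'I_n0) : {set good} :=
  [set g : good | match g with
                  | inl (inl _) => true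
                  | inl (inr p) => p.1 == a
                  | inr _ => false end].

Definition allocated : {set good} :=
  [set g : good | if g is inl (inr p) then thr p.2 <= p.1 else false].

Definition sat (a : 'I_n0) : nat := #|[set l : 'I_k | thr l <= a]|.

Lemma card_good : #|{: good}| = k.+1 + n0 * k + D.
Proof. by rewrite !card_sum card_prod !card_ord. Qed.

Lemma card_approved_allocated a : #|approved a :&: allocated| = sat a.
Proof.
have -> : approved a :&: allocated =
          (fun l => inl (inr (a, l)) : good) @: [set l : 'I_k | thr l <= a].
  apply/setP => g; rewrite !inE; apply/idP/imsetP.
    by case: g => [[c|[b l]]|d] //= /andP[/eqP -> h]; exists l; rewrite ?inE.
  by case=> l; rewrite inE => h ->; rewrite /= eqxx.
by rewrite card_imset // => x y [].
Qed.

Lemma card_allocated : #|allocated| <= n0 * k.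
Proof.
have -> : n0 * k = #|{: 'I_n0 * 'I_k}| by rewrite card_prod !card_ord.
rewrite -(@card_imset _ _ (fun p => inl (inr p) : good)); last by move=> x y [].
apply: subset_leq_card; apply/subsetP => g; rewrite inE.
by case: g => [[c|p]|d] // _; apply: imset_f.
Qed.

Lemma leq_card_bigcap_approved (A : {set 'I_n0}) :
  k.+1 <= #|\bigcap_(a in A) approved a|.
Proof.
apply: (@leq_trans #|{: 'I_k.+1}|); first by rewrite card_ord.
rewrite -(@card_imset _ _ (fun c => inl (inl c) : good)); last by move=> x y [].
apply: subset_leq_card; apply/bigcapsP => a _.
by apply/subsetP => g /imsetP[c _ ->]; rewrite inE.
Qed.

Lemma sum_sat : (forall l : 'I_k, thr l <= n0) ->
  \sum_(a < n0) sat a = \sum_(l < k) (n0 - thr l).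
Proof.
move=> thr_le; rewrite /sat.
under eq_bigr => a _ do rewrite -sum1_card big_mkcond /=.
rewrite exchange_big /=; apply: eq_bigr => l _.
rewrite -(card_ord_geq n0 (thr l)) -sum1_card [RHS]big_mkcond /=.
by apply: eq_bigr => a _; rewrite !inE.
Qed.

Lemma card_sat_ltn j : {homo thr : x y / x <= y} -> 0 < j <= k ->
  #|[set a : 'I_n0 | sat a < j]| <= thr j.-1.
Proof.
move=> thr_homo /andP[j_gt0 jk].
apply: leq_trans (_ : #|[set a : 'I_n0 | a < thr j.-1]| <= _); last first.
  by rewrite card_ord_ltn geq_minl.
apply: subset_leq_card; apply/subsetP => a; rewrite !inE ltnNge.
apply: contraR; rewrite -leqNgt => thr_le_a.
rewrite -[j](minn_idPl jk) -card_ord_ltn.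
apply: subset_leq_card; apply/subsetP => l; rewrite !inE => lj.
by apply: leq_trans thr_le_a; apply: thr_homo; rewrite -ltnS prednK.
Qed.

Variable e : nat.

Definition approved_goods (i : 'I_(n0 + e)) : {set 'I_#|{: good}|} :=
  if fintype.split i is inl a then enum_rank @: approved a else set0.

Definition allocated_goods : {set 'I_#|{: good}|} := enum_rank @: allocated.

Definition real_agents : {set 'I_(n0 + e)} := lshift e @: [set: 'I_n0].

Lemma approved_goods_lshift a :
  approved_goods (lshift e a) = enum_rank @: approved a.
Proof. by rewrite /approved_goods (unsplitK (inl a)). Qed.

Lemma card_real_agents : #|real_agents| = n0.
Proof. by rewrite card_imset ?cardsT ?card_ord //; apply: lshift_inj. Qed.

Lemma card_approved_allocated_goods a :
  #|approved_goods (lshift e a) :&: allocated_goods| = sat a.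
Proof.
rewrite approved_goods_lshift -imsetI; last by move=> x y _ _; apply: enum_rank_inj.
by rewrite card_imset ?card_approved_allocated //; apply: enum_rank_inj.
Qed.

Lemma card_allocated_goods : #|allocated_goods| <= n0 * k.
Proof. by rewrite card_imset ?card_allocated //; apply: enum_rank_inj. Qed.

Lemma leq_card_bigcap_real_agents :
  k.+1 <= #|\bigcap_(i in real_agents) approved_goods i|.
Proof.
apply: leq_trans (leq_card_bigcap_approved [set: 'I_n0]) _.
rewrite -(card_imset _ (@enum_rank_inj _)); apply: subset_leq_card.
apply/bigcapsP => _ /imsetP[a _ ->]; rewrite approved_goods_lshift.
by apply: imsetS; apply: bigcap_inf.
Qed.

Lemma subset_real_agents (N' : {set 'I_(n0 + e)}) :
  \bigcap_(i in N') approved_goods i != set0 -> N' \subset real_agents.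
Proof.
apply: contraR => /subsetPn[i iN' not_real]; rewrite -subset0.
apply: subset_trans (bigcap_inf i iN') _; rewrite /approved_goods.
case: (splitP i) => [a ia | b _]; last exact: sub0set.
by case/negP: not_real; rewrite (_ : i = lshift e a) ?imset_f //; apply: val_inj.
Qed.

Lemma exists_satisfied_member (N' : {set 'I_(n0 + e)}) j :
    {homo thr : x y / x <= y} -> 0 < j <= k ->
    N' \subset real_agents -> thr j.-1 < #|N'| ->
  exists2 a, lshift e a \in N' & j <= sat a.
Proof.
move=> thr_homo jk N'_real large.
have : ~~ (N' \subset lshift e @: [set a | sat a < j]).
  apply: contraTN large => /subset_leq_card N'_le; rewrite -leqNgt.
  apply: leq_trans N'_le _; rewrite card_imset; last exact: lshift_inj.
  exact: card_sat_ltn.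
case/subsetPn => i iN'; have /imsetP[a _ ia] := subsetP N'_real i iN'.
rewrite {i}ia in iN' *; rewrite mem_imset ?inE -?leqNgt; last exact: lshift_inj.
by exists a.
Qed.

End Goods.

(* Imported only now: their [set0] and [subsetP] would shadow those of finset. *)
From mathcomp Require Import all_classical all_reals all_analysis.
From mathcomp Require Import ring lra.
Local Open Scope classical_set_scope.
Local Open Scope ring_scope.

Lemma truncn_pred_ltr (R : archiNumDomainType) (x : R) :
  0 < x -> ((Num.truncn x).-1)%:R < x.
Proof.
move=> x_gt0; have /andP[trunc_le _] := truncn_itv (ltW x_gt0).
case: (Num.truncn x) trunc_le => [_ | p p1_le] //=.
by apply: lt_le_trans p1_le; rewrite ltr_nat.
Qed.

Lemma truncn_pred_ger (R : archiNumDomainType) (x : R) :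
  0 <= x -> x - 2 <= ((Num.truncn x).-1)%:R.
Proof.
move=> x_ge0; have /andP[_ lt_trunc] := truncn_itv x_ge0.
rewrite lerBlDr; apply: le_trans (ltW lt_trunc) _.
by rewrite -natrD ler_nat; lia.
Qed.

Lemma sum_ord_succ (R : numFieldType) k :
  \sum_(l < k) (l.+1)%:R = (k * k.+1)%:R / 2 :> R.
Proof.
elim: k => [|k IHk]; first by rewrite big_ord0 mul0r.
rewrite big_ord_recr /= IHk; apply: (@mulIf _ 2); first by rewrite pnatr_eq0.
rewrite mulrDl !divfK ?pnatr_eq0 // -natrM -natrD; congr _%:R; lia.
Qed.

Lemma len_set0 (R : realType) : len (set0 : set R) = 0.
Proof. by rewrite /len measure0. Qed.

Lemma is_piece_set0 (R : realType) (c : R) : is_piece c set0.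
Proof.
exists [::]; split=> //; split; first by move=> k l /andP[_].
by apply/seteqP; split=> x // [].
Qed.

Lemma len_piece0 (R : realType) (S : set R) : is_piece 0 S -> len S = 0.
Proof.
case=> s [s_itv [_ ->]]; set U := \bigcup_(k in _) _.
have : U `<=` [set 0].
  move=> x [i /= i_lt]; rewrite /= in_itv /= => /andP[ax xb].
  have [a_ge0 [_ b_le0]] := s_itv i i_lt.
  by apply/eqP; rewrite eq_le (le_trans xb b_le0) (le_trans a_ge0 ax).
by case/subset_set1 => ->; rewrite ?len_set0 // /len lebesgue_measure_set1.
Qed.

Definition threshold {R : archiRealFieldType} (t : R) (n0 l : nat) : nat :=
  (Num.truncn (l.+1%:R * n0%:R / t)).-1.

Section Threshold.
Variables (R : archiRealFieldType) (t : R) (n0 : nat).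
Hypothesis t_gt0 : 0 < t.
Local Notation thr := (threshold t n0).

Lemma threshold_homo : {homo thr : x y / (x <= y)%N}.
Proof.
move=> x y xy; rewrite /threshold -!subn1 leq_sub2r // le_truncn //.
by rewrite ler_wpM2r ?invr_ge0 ?(ltW t_gt0) // ler_wpM2r // ler_nat.
Qed.

Lemma threshold_lb l : l.+1%:R * n0%:R / t - 2 <= (thr l)%:R.
Proof. by apply: truncn_pred_ger; rewrite divr_ge0 ?(ltW t_gt0). Qed.

Lemma threshold_ub j :
  (0 < n0)%N -> (0 < j)%N -> (thr j.-1)%:R < j%:R * n0%:R / t.
Proof.
move=> n0_gt0 j_gt0; rewrite /threshold prednK //.
by apply: truncn_pred_ltr; rewrite divr_gt0 // mulr_gt0 // ltr0n.
Qed.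

Lemma threshold_le l : l.+1%:R <= t -> (thr l <= n0)%N.
Proof.
move=> l_le_t; apply: leq_trans (leq_pred _) _; rewrite truncn_le_nat.
apply: le_lt_trans (_ : n0%:R < n0.+1%:R); last by rewrite ltr_nat.
by rewrite ler_pdivrMr // mulrC ler_wpM2l.
Qed.

End Threshold.

Section Instance.
Variables (R : realType) (t : R) (k n0 : nat).
Hypotheses (t_ge1 : 1 <= t) (k_le_t : k%:R <= t) (t_lt_k1 : t < k.+1%:R).
Hypothesis n0_gt0 : (0 < n0)%N.

Let t_gt0 : 0 < t := lt_le_trans ltr01 t_ge1.

Local Notation thr := (threshold t n0).
Local Notation D := (k.+1 * (1 + n0 * k))%N.
Local Notation e := (n0 * n0 * k)%N.
Local Notation Ac := (fun _ : 'I_(n0 + e) => set0 : set R).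
Local Notation Ag := (@approved_goods k n0 D e).
Local Notation Gs := (@allocated_goods k n0 D thr).
Local Notation N := (@real_agents n0 e).
Local Notation alpha := (t * (1 + n0 * k)%:R).

Lemma cohesion_threshold x : x * (n0 + e)%:R / alpha = x * n0%:R / t.
Proof.
have -> : (n0 + e)%:R = n0%:R * (1 + n0 * k)%:R :> R.
  by rewrite -natrM; congr _%:R; lia.
by field; rewrite gt_eqF ?ltr0n // gt_eqF.
Qed.

Lemma util_real_agent a :
  util (Ac (lshift e a)) (Ag (lshift e a)) set0 Gs = (sat k thr a)%:R.
Proof. by rewrite /util setI0 len_set0 add0r card_approved_allocated_goods. Qed.

Lemma instance_valid : is_instance 0 alpha Ac Ag.
Proof.
do ![split] => //; first by rewrite addn_gt0 n0_gt0.
- by rewrite lt_max ltr0n card_good orbC addn_gt0 addn_gt0.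
- by rewrite mulr_gt0.
- rewrite add0r card_good; apply: le_trans (_ : D%:R <= _).
    by rewrite natrM ler_wpM2r // ltW.
  by rewrite ler_nat leq_addl.
- by move=> i; apply: is_piece_set0.
Qed.

Lemma real_agents_cohesive : cohesive alpha Ac Ag t N.
Proof.
split.
  by rewrite cohesion_threshold card_real_agents mulrAC divff ?gt_eqF // mul1r.
rewrite /size_b bigcap_const ?len_set0 ?add0r; last first.
  by exists (lshift e (Ordinal n0_gt0)); rewrite /= imset_f ?inE.
by apply: ltW (lt_le_trans t_lt_k1 _); rewrite ler_nat leq_card_bigcap_real_agents.
Qed.

Lemma allocation_valid : is_allocation 0 alpha set0 Gs.
Proof.
split; first exact: is_piece_set0.
rewrite /size_b len_set0 add0r; apply: le_trans (_ : (1 + n0 * k)%:R <= _).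
  by rewrite ler_nat (leq_trans (card_allocated_goods _ _ _ _)) ?leq_addl.
by rewrite ler_peMl.
Qed.

Lemma allocation_EJRM : EJRM 0 alpha Ac Ag set0 Gs.
Proof.
move=> t' N' t'_gt0 [large big] [Cst [Gst [Cst_piece [size_Gst _]]]].
rewrite /size_b len_piece0 // add0r in size_Gst.
rewrite -{t'}size_Gst cohesion_threshold in t'_gt0 large big *.
set j := #|Gst| in t'_gt0 large big *.
have /card_gt0P[i0 i0N'] : (0 < #|N'|)%N.
  rewrite -(ltr0n R); apply: lt_le_trans large.
  by rewrite divr_gt0 // mulr_gt0 // ltr0n.
rewrite /size_b bigcap_const ?len_set0 ?add0r in big; last by exists i0.
have N'_real : N' \subset N.
  by apply: subset_real_agents; rewrite -card_gt0 -(ltr0n R); apply: lt_le_trans big.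
have j_le_k : (j <= k)%N.
  rewrite -ltnS -(ltr_nat R); apply: le_lt_trans t_lt_k1.
  have : j%:R * n0%:R / t <= n0%:R :> R.
    apply: le_trans large _.
    by rewrite ler_nat (leq_trans (subset_leq_card N'_real)) ?card_real_agents.
  by rewrite ler_pdivrMr // mulrC ler_pM2l // ltr0n.
have j_range : (0 < j <= k)%N by rewrite j_le_k andbT -(ltr0n R).
have crowded : (thr j.-1 < #|N'|)%N.
  rewrite -(ltr_nat R); apply: lt_le_trans large.
  by apply: threshold_ub; case/andP: j_range.
have [a aN' j_le_sat] :=
  exists_satisfied_member (threshold_homo n0 t_gt0) j_range N'_real crowded.
by exists (lshift e a) => //; rewrite util_real_agent ler_nat.
Qed.

Lemma avg_sat_real_agents :
  avg_sat Ac Ag N set0 Gs = n0%:R^-1 * \sum_(l < k) (n0 - thr l)%:R.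
Proof.
rewrite /avg_sat card_real_agents big_imset /=; last first.
  by move=> x y _ _; apply: lshift_inj.
under eq_bigr => a _ do rewrite util_real_agent.
rewrite (eq_bigl xpredT) => [|a]; last by rewrite inE.
rewrite -natr_sum sum_sat ?natr_sum // => l.
by apply: threshold_le => //; apply: le_trans k_le_t; rewrite ler_nat.
Qed.

Lemma avg_sat_real_agents_le :
  avg_sat Ac Ag N set0 Gs <= k%:R * (1 - (k%:R + 1) / (2 * t)) + 2 * k%:R / n0%:R.
Proof.
have term_le (l : 'I_k) :
    (n0 - thr l)%:R <= n0%:R + 2 - n0%:R / t * l.+1%:R :> R.
  rewrite natrB; last by apply: threshold_le; rewrite // (le_trans _ k_le_t) ?ler_nat.
  have := threshold_lb n0 t_gt0 l; lra.
rewrite avg_sat_real_agents.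
apply: le_trans (ler_wpM2l _ (ler_sum _ (fun l _ => term_le l))) _.
  by rewrite invr_ge0.
rewrite big_split /= sumrN -mulr_sumr sum_ord_succ sumr_const card_ord.
rewrite le_eqVlt; apply/orP; left; apply/eqP.
by rewrite -mulr_natr natrM -natr1; field; rewrite !gt_eqF ?ltr0n.
Qed.

End Instance.

Theorem mainTheorem14 (R : realType) (t eps : R) :
  1 <= t -> 0 < eps ->
  exists (n m : nat) (c alpha : R)
         (Ac : 'I_n -> set R) (Ag : 'I_n -> {set 'I_m})
         (Nstar : {set 'I_n}) (Cs : set R) (Gs : {set 'I_m}),
    is_instance c alpha Ac Ag /\
    cohesive alpha Ac Ag t Nstar /\
    is_allocation c alpha Cs Gs /\
    EJRM c alpha Ac Ag Cs Gs /\
    avg_sat Ac Ag Nstar Cs Gs <=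
      (Num.floor t)%:~R * (1 - ((Num.floor t)%:~R + 1) / (2 * t)) + eps.
Proof.
move=> t_ge1 eps_gt0; have t_gt0 : 0 < t := lt_le_trans ltr01 t_ge1.
set k := Num.truncn t; have /andP[k_le_t t_lt_k1] := truncn_itv (ltW t_gt0).
have -> : (Num.floor t)%:~R = k%:R :> R.
  by rewrite /k truncn_floor (ltW t_gt0) natr_absz ger0_norm // floor_ge0 ltW.
set n0 := (Num.truncn (2 * k%:R / eps)).+1; have n0_gt0 : (0 < n0)%N by [].
have err_le : 2 * k%:R / n0%:R <= eps.
  rewrite ler_pdivrMr ?ltr0n // -ler_pdivrMl // mulrC.
  exact/ltW/truncnS_gt.
exists _, _, 0, (t * (1 + n0 * k)%:R), (fun _ => set0),
  (@approved_goods k n0 (k.+1 * (1 + n0 * k)) (n0 * n0 * k)),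
  (@real_agents n0 (n0 * n0 * k)), set0,
  (@allocated_goods k n0 (k.+1 * (1 + n0 * k)) (threshold t n0)).
split; first exact: instance_valid t_ge1 t_lt_k1 n0_gt0.
split; first exact: real_agents_cohesive t_ge1 k_le_t t_lt_k1 n0_gt0.
split; first exact: allocation_valid k n0 t_ge1.
split; first exact: allocation_EJRM t_ge1 k_le_t t_lt_k1 n0_gt0.
apply: le_trans (avg_sat_real_agents_le t_ge1 k_le_t n0_gt0) _.
by rewrite lerD2l.
Qed.
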